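(* Let $m\ge 3$, $n\ge 2$, let $\mathcal{C}^3_{m,n}=(V_1,V_2,E)$, and let $e\in E$ be a hyperedge containing exactly two vertices of $V_1$ and one vertex of $V_2$. Then the Seidel spectrum of $\mathcal{C}^3_{m,n}-e$ consists of the eigenvalue $2n-1$ with multiplicity $m-3$, the eigenvalue $2m-1$ with multiplicity $n-2$, and the five roots $\tau_1,\dots,\tau_5$ of $\xi_2(\tau)=0$, where \begin{align*} \xi_2(\tau)={}&-\tau^5+(-5+5m+7n-4mn)\tau^4\\ &+(46+4m-8m^2+4n-22mn-6m^2n+4m^3n-18n^2+2mn^2+4m^2n^2+4mn^3)\tau^3\\ &+(286-206m+8m^2+4m^3-234n+62mn-10m^2n+40m^3n-8m^4n-46n^2-10mn^2\\ &\quad+64m^2n^2-24m^3n^2+36n^3+52mn^3-24m^2n^3-16mn^4)\tau^2\\ &+(83-228m-40m^2+40m^3+76n-90mn+246m^2n-28m^3n-16m^4n-366n^2+238mn^2\\ &\quad+132m^2n^2-160m^3n^2+32m^4n^2+248n^3+20mn^3-184m^2n^3+48m^3n^3-40n^4\\ &\quad-88mn^4+48m^2n^4+16mn^5)\tau\\ &+(-921+873m-408m^2+84m^3+2387n-2250mn+1274m^2n-368m^3n+24m^4n-2322n^2\\ &\quad+1994mn^2-680m^2n^2+40m^3n^2+32m^4n^2+1012n^3-732mn^3-160m^2n^3\\ &\quad+160m^3n^3-32m^4n^3-168n^4+72mn^4+160m^2n^4-32m^3n^4+16mn^5-32m^2n^5). \end{align*}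
   Context: For a hypergraph $\mathcal{H}$ and distinct vertices $i,j$, the co-degree $c_{ij}$ is the number of hyperedges containing both $i$ and $j$. The Seidel matrix $\mathcal{S}(\mathcal{H})$ has zero diagonal and $(i,j)$-entry $1-2c_{ij}$ for $i\neq j$; its eigenvalues (with multiplicity) form the Seidel spectrum of $\mathcal{H}$. The complete $3$-uniform bipartite hypergraph $\mathcal{C}^3_{m,n}=(V_1,V_2,E)$ has vertex set $V_1\sqcup V_2$, $|V_1|=m$, $|V_2|=n$, and $E$ = all $3$-subsets meeting both $V_1$ and $V_2$. For a hyperedge $e$, $\mathcal{H}-e$ denotes the hypergraph with the same vertex set and hyperedge set $E\setminus\{e\}$. *)

From HB Require Import structures.
From mathcomp Require Import all_boot all_order all_algebra.
Set Implicit Arguments. Unset Strict Implicit. Unset Printing Implicit Defensive.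
Import Order.TTheory GRing.Theory Num.Theory.
Local Open Scope ring_scope.

Definition codegree (k : nat) (E : {set {set 'I_k}}) (i j : 'I_k) : nat :=
  #|[set f in E | (i \in f) && (j \in f)]|.

Definition seidel_matrix (R : nzRingType) (k : nat) (E : {set {set 'I_k}})
  : 'M[R]_k :=
  \matrix_(i, j) (if i == j then 0 else 1 - 2 * (codegree E i j)%:R).

Definition V1 (m n : nat) : {set 'I_(m + n)} := [set i : 'I_(m + n) | (i < m)%N].
Definition V2 (m n : nat) : {set 'I_(m + n)} := [set i : 'I_(m + n) | (m <= i)%N].

Definition complete_bip3 (m n : nat) : {set {set 'I_(m + n)}} :=
  [set f : {set 'I_(m + n)} | [&& #|f| == 3%N, f :&: V1 m n != set0
                                & f :&: V2 m n != set0]].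

Definition xi2 (R : comNzRingType) (m0 n0 : nat) : {poly R} :=
  let m : R := m0%:R in let n : R := n0%:R in
  let c5 := -1 in
  let c4 := -5 + 5* m + 7* n - 4* m* n in
  let c3 := 46 + 4* m - 8* m^+2 + 4* n - 22* m* n - 6* m^+2* n + 4* m^+3* n - 18* n^+2
            + 2* m* n^+2 + 4* m^+2* n^+2 + 4* m* n^+3 in
  let c2 := 286 - 206* m + 8* m^+2 + 4* m^+3 - 234* n + 62* m* n - 10* m^+2* n
            + 40* m^+3* n - 8* m^+4* n - 46* n^+2 - 10* m* n^+2
            + 64* m^+2* n^+2 - 24* m^+3* n^+2 + 36* n^+3 + 52* m* n^+3 - 24* m^+2* n^+3
            - 16* m* n^+4 in
  let c1 := 83 - 228* m - 40* m^+2 + 40* m^+3 + 76* n - 90* m* n + 246* m^+2* n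
            - 28* m^+3* n - 16* m^+4* n - 366* n^+2 + 238* m* n^+2
            + 132* m^+2* n^+2 - 160* m^+3* n^+2 + 32* m^+4* n^+2 + 248* n^+3 + 20* m* n^+3
            - 184* m^+2* n^+3 + 48* m^+3* n^+3 - 40* n^+4
            - 88* m* n^+4 + 48* m^+2* n^+4 + 16* m* n^+5 in
  let c0 := -921 + 873* m - 408* m^+2 + 84* m^+3 + 2387* n - 2250* m* n + 1274* m^+2* n
            - 368* m^+3* n + 24* m^+4* n - 2322* n^+2
            + 1994* m* n^+2 - 680* m^+2* n^+2 + 40* m^+3* n^+2 + 32* m^+4* n^+2
            + 1012* n^+3 - 732* m* n^+3 - 160* m^+2* n^+3
            + 160* m^+3* n^+3 - 32* m^+4* n^+3 - 168* n^+4 + 72* m* n^+4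
            + 160* m^+2* n^+4 - 32* m^+3* n^+4 + 16* m* n^+5 - 32* m^+2* n^+5 in
  c5%:P * 'X^5 + c4%:P * 'X^4 + c3%:P * 'X^3 + c2%:P * 'X^2 + c1%:P * 'X + c0%:P.

From HB Require Import structures.
From mathcomp Require Import all_boot all_order all_algebra.
From mathcomp Require Import zify ring lra.
Import Order.TTheory GRing.Theory Num.Theory.
Set Implicit Arguments. Unset Strict Implicit. Unset Printing Implicit Defensive.

(* The vertices fall into four classes: the two vertices of e in V1, the other
   m - 2 vertices of V1, the vertex of e in V2 and the other n - 1 vertices of V2.
   The co-degree of two distinct vertices only depends on their classes, so
   x I - S = diag(d o c) + P K P^T with P the class incidence matrix and K a 4x4
   matrix.  Sylvester's identity det(I + AB) = det(I + BA) then gives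
   det(x I - S) = d_0 d_1^(m-3) d_3^(n-2) det(diag d + diag(class sizes) K), where
   d_1 = x - (2n - 1), d_3 = x - (2m - 1), and d_0 times the 4x4 determinant is
   -xi2(x).  This holds for every large x, hence as an identity of polynomials. *)

Lemma codegree_setD1 k (E : {set {set 'I_k}}) (e : {set 'I_k}) (i j : 'I_k) :
  e \in E -> codegree (E :\ e) i j + ((i \in e) && (j \in e)) = codegree E i j.
Proof.
move=> eE; rewrite /codegree [RHS](cardsD1 e) inE eE addnC; congr (_ + _).
by apply: eq_card => f; rewrite !inE -andbA.
Qed.

Lemma set3_of_card3 (T : finType) (f : {set T}) (i j : T) :
  #|f| = 3 -> i \in f -> j \in f -> i != j -> exists2 w, w \in f :\ i :\ j & f = [set i; j; w].
Proof.
move=> f3 fi fj ij.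
have /cards1P[w fw] : #|f :\ i :\ j| == 1.
  move: f3; rewrite (cardsD1 i) fi (cardsD1 j (f :\ i)) !inE eq_sym ij fj.
  by case: #|_| => [|[]].
exists w; first by rewrite fw set11.
apply/setP => x; move/setP/(_ x): fw; rewrite !inE.
case: (eqVneq x i) => [->|_]; first by rewrite fi.
by case: (eqVneq x j) => [->|_] /=; rewrite ?fj.
Qed.

Lemma codegree_3uniform k (E : {set {set 'I_k}}) (i j : 'I_k) :
  i != j -> {in E, forall f : {set 'I_k}, #|f| = 3} ->
  codegree E i j = #|[set w | [&& w != i, w != j & [set i; j; w] \in E]]|.
Proof.
move=> ij E3; rewrite /codegree -(card_in_imset (f := fun w => [set i; j; w])); last first.
  move=> w1 w2; rewrite !inE => /and3P[w1i w1j _] _ eq_w.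
  have : w1 \in [set i; j; w2] by rewrite -eq_w !inE eqxx !orbT.
  by rewrite !inE (negPf w1i) (negPf w1j) => /eqP.
apply: eq_card => f; rewrite inE; apply/andP/imsetP => [[fE /andP[fi fj]]|].
  have [w] := set3_of_card3 (E3 f fE) fi fj ij; rewrite !inE => /and3P[wj wi _] def_f.
  by exists w; rewrite // inE wi wj -def_f.
by case=> w; rewrite inE => /and3P[_ _ wE] ->; rewrite wE !inE !eqxx orbT.
Qed.

Lemma card_V1 m n : #|V1 m n| = m.
Proof.
have -> : V1 m n = [set lshift n i | i : 'I_m].
  apply/setP => i; rewrite inE; apply/idP/imsetP => [lt_im|[j _ ->]].
    by exists (Ordinal lt_im) => //; apply/val_inj.
  by rewrite /= ltn_ord.
by rewrite card_imset ?cardsT ?card_ord //; exact: lshift_inj.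
Qed.

Lemma V2_setC m n : V2 m n = ~: V1 m n.
Proof. by apply/setP => i; rewrite !inE leqNgt. Qed.

Lemma card_V2 m n : #|V2 m n| = n.
Proof. by have := cardsC (V1 m n); rewrite -V2_setC card_V1 card_ord => /addnI. Qed.

Lemma set3I_eq0 k (i j w : 'I_k) (A : {set 'I_k}) :
  ([set i; j; w] :&: A != set0) = [|| i \in A, j \in A | w \in A].
Proof.
apply/set0Pn/idP => [[x]|].
  by rewrite !inE -!orbA => /andP[/or3P[] /eqP-> ->]; rewrite ?orbT.
by case/or3P => Ax; [exists i | exists j | exists w]; rewrite !inE eqxx ?orbT Ax.
Qed.

Lemma card_set3 k (i j w : 'I_k) : i != j -> w != i -> w != j -> #|[set i; j; w]| = 3.
Proof.
move=> ij wi wj; rewrite -setUA !cardsU1 cards1 !inE (negPf ij) eq_sym (negPf wi).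
by rewrite eq_sym (negPf wj).
Qed.

Lemma card_neq2 k (i j : 'I_k) : i != j -> #|[set w | (w != i) && (w != j)]| = k - 2.
Proof.
move=> ij; have := cardsC [set i; j]; rewrite cards2 ij card_ord => def_k.
by rewrite -[in RHS]def_k addKn; apply: eq_card => w; rewrite !inE negb_or.
Qed.

(* [a] and [b] tell whether the two vertices lie in V2. *)
Definition bip3_codegree (m n : nat) (a b : bool) : nat :=
  if a && b then m else if ~~ a && ~~ b then n else m + n - 2.

Lemma codegree_complete_bip3 m n (i j : 'I_(m + n)) : i != j ->
  codegree (complete_bip3 m n) i j = bip3_codegree m n (m <= i) (m <= j).
Proof.
move=> ij; rewrite codegree_3uniform // => [|f]; last by rewrite inE => /and3P[/eqP].
have memW w : [&& w != i, w != j & [set i; j; w] \in complete_bip3 m n]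
  = [&& val w != val i, val w != val j, [|| i < m, j < m | w < m]
      & [|| m <= i, m <= j | m <= w]].
  rewrite !val_eqE inE; case: (eqVneq w i) => //= wi; case: (eqVneq w j) => //= wj.
  by rewrite card_set3 // !set3I_eq0 !inE.
have card_mixed := card_neq2 ij; move: ij; rewrite -val_eqE /bip3_codegree => ij.
by case: (leqP m i) => im; case: (leqP m j) => jm /=;
  [rewrite -[RHS](card_V1 m n) | rewrite -[RHS]card_mixed
  | rewrite -[RHS]card_mixed | rewrite -[RHS](card_V2 m n)];
  apply: eq_card => w; rewrite [in LHS]inE memW !inE -?val_eqE /=; apply/idP/idP; lia.
Qed.

Local Open Scope ring_scope.

Lemma sylvester_det (R : comNzRingType) (k r : nat) (A : 'M[R]_(k, r)) (B : 'M[R]_(r, k)) :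
  \det (1%:M + A *m B) = \det (1%:M + B *m A).
Proof.
have E1 : block_mx (1%:M : 'M_k) (- A) B (1%:M : 'M_r)
   = block_mx 1%:M 0 B 1%:M *m block_mx 1%:M (- A) 0 (1%:M + B *m A).
  rewrite mulmx_block !mul1mx !mul0mx !mulmx1 ?addr0 ?add0r mulmxN.
  by rewrite (addrC 1%:M) addKr.
have E2 : block_mx (1%:M : 'M_k) (- A) B (1%:M : 'M_r)
   = block_mx (1%:M + A *m B) (- A) 0 1%:M *m block_mx 1%:M 0 B 1%:M.
  by rewrite mulmx_block !mul1mx !mul0mx !mulmx0 !mulmx1 ?addr0 !add0r mulNmx addrK.
have := congr1 determinant (etrans (esym E2) E1).
by rewrite !det_mulmx !det_lblock !det_ublock !det1 !mul1r ?mulr1.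
Qed.

Section ClassQuotient.
Variables (F : fieldType) (k r : nat) (c : 'I_k -> 'I_r).

Local Notation P := (rowsub c 1%:M : 'M[F]_(k, r)).
Local Notation fiber p := #|[pred i | c i == p]|.

Lemma rowsub1_conj_diag_mx (v : 'rV[F]_r) :
  P^T *m diag_mx (colsub c v) *m P = diag_mx (\row_p (v 0 p *+ fiber p)).
Proof.
rewrite mul_mx_diag; apply/matrixP => p q; rewrite !mxE.
under eq_bigr do rewrite !mxE.
rewrite (bigID (fun i => c i == p)) /= [X in _ + X]big1 => [|i /negPf cip]; last first.
  by rewrite cip !mul0r.
under eq_bigr => i /eqP -> do rewrite eqxx mul1r.
rewrite addr0 sumr_const.
by case: eqVneq; rewrite ?mulr1 ?mulr1n ?mulr0 ?mul0rn ?mulr0n.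
Qed.

Lemma mxsub_mulmx_rowsub1 (K : 'M[F]_r) : mxsub c c K = P *m K *m P^T.
Proof.
by rewrite mul_rowsub_mx mul1mx trmx_mxsub trmx1 mulmx_colsub mulmx1 mxsubcr.
Qed.

Lemma det_diag_add_mxsub (d : 'rV[F]_r) (K : 'M[F]_r) : (forall p, d 0 p != 0) ->
  \det (diag_mx (colsub c d) + mxsub c c K)
  = (\prod_p d 0 p ^+ fiber p) / (\prod_p d 0 p)
    * \det (diag_mx d + diag_mx (\row_p (fiber p)%:R) *m K).
Proof.
move=> d_neq0; pose dV := \row_p (d 0 p)^-1.
have dK : diag_mx (colsub c d) *m diag_mx (colsub c dV) = 1%:M.
  by apply/matrixP => i j; rewrite mulmx_diag !mxE mulfV.
have -> : diag_mx (colsub c d) + mxsub c c K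
    = diag_mx (colsub c d) *m (1%:M + diag_mx (colsub c dV) *m P *m K *m P^T).
  by rewrite mulmxDr mulmx1 !mulmxA dK mul1mx mxsub_mulmx_rowsub1.
rewrite det_mulmx sylvester_det !mulmxA rowsub1_conj_diag_mx.
have -> : 1%:M + diag_mx (\row_p (dV 0 p *+ fiber p)) *m K
    = diag_mx dV *m (diag_mx d + diag_mx (\row_p (fiber p)%:R) *m K).
  rewrite mulmxDr mulmxA !mulmx_diag; congr (_ + _ *m K).
    by apply/matrixP => p q; rewrite !mxE mulVf.
  by apply/matrixP => p q; rewrite !mxE mulr_natr.
rewrite det_mulmx !det_diag mulrA; congr (_ * _ * _).
  rewrite (partition_big c xpredT) //=; apply: eq_bigr => p _.
  by under eq_bigr => i /eqP ci do rewrite mxE ci; rewrite prodr_const.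
by rewrite -prodfV; apply: eq_bigr => p _; rewrite mxE.
Qed.

End ClassQuotient.

Lemma horner_char_poly (R : comNzRingType) n (A : 'M[R]_n) (x : R) :
  (char_poly A).[x] = \det (x%:M - A).
Proof.
rewrite /char_poly -horner_evalE -det_map_mx; congr (\det _).
apply/matrixP => i j; rewrite !mxE /= horner_evalE hornerD hornerN hornerC.
by case: (i == j); rewrite /= ?mulr1n ?mulr0n ?hornerX ?horner0.
Qed.

Lemma eq_poly_gt (R : numDomainType) (p q : {poly R}) (N : R) :
  (forall x, N < x -> p.[x] = q.[x]) -> p = q.
Proof.
move=> eq_pq; apply/eqP; rewrite -subr_eq0; apply/eqP.
pose rs := [seq N + i.+1%:R | i <- iota 0 (size (p - q))].
apply: (@roots_geq_poly_eq0 _ _ rs); last by rewrite size_map size_iota.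
  apply/allP => _ /mapP[i _ ->]; rewrite /root hornerD hornerN eq_pq ?subrr //.
  by rewrite ltrDl ltr0Sn.
by rewrite map_inj_uniq ?iota_uniq // => i j /addrI /eqP; rewrite eqr_nat => /eqP[].
Qed.

(* Vertex classes: 0 = V1 :&: e, 1 = V1 :\: e, 2 = V2 :&: e, 3 = V2 :\: e. *)
Section Bip3Quotient.
Variables (m n : nat) (e : {set 'I_(m + n)}).

Definition bip3_class (i : 'I_(m + n)) : 'I_4 := inord (2 * (m <= i) + (i \notin e))%N.

Lemma bip3_classE i : bip3_class i = (2 * (m <= i) + (i \notin e))%N :> nat.
Proof. by rewrite inordK //; case: (m <= i)%N; case: (i \in e). Qed.

Lemma bip3_class_side i : (1 < bip3_class i)%N = (m <= i)%N.
Proof. by rewrite bip3_classE; case: (m <= i)%N; case: (i \in e). Qed.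

Lemma bip3_class_mem i : ~~ odd (bip3_class i) = (i \in e).
Proof. by rewrite bip3_classE; case: (m <= i)%N; case: (i \in e). Qed.

Definition bip3_class_size (p : nat) : nat :=
  match p with 0 => 2 | 1 => m - 2 | 2 => 1 | _ => n - 1 end.

Lemma card_bip3_class (p : 'I_4) : #|e :&: V1 m n| = 2%N -> #|e :&: V2 m n| = 1%N ->
  #|[pred i | bip3_class i == p]| = bip3_class_size p.
Proof.
move=> e1 e2; have classE i : (bip3_class i == p) = (2 * (m <= i) + (i \notin e) == p)%N.
  by rewrite -val_eqE /= bip3_classE.
case: p classE => [[|[|[|[|//]]]] ?] /= classE;
  [rewrite -[RHS]e1 | rewrite -[in RHS](card_V1 m n) -[in RHS]e1 [e :&: _]setIC -cardsD
  | rewrite -[RHS]e2 | rewrite -[in RHS](card_V2 m n) -[in RHS]e2 [e :&: _]setIC -cardsD];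
  by apply: eq_card => i; rewrite !inE classE; case: (leqP m i); case: (i \in e).
Qed.

(* Off the diagonal, x%:M - S has entry 2 c_ij - 1, which only depends on the classes. *)
Definition bip3_block (R : nzRingType) (p q : nat) : R :=
  2 * ((bip3_codegree m n (1 < p)%N (1 < q)%N)%:R - (~~ odd p && ~~ odd q)%:R) - 1.

Definition bip3_quot (R : nzRingType) : 'M[R]_4 := \matrix_(p, q) bip3_block R p q.

Lemma seidel_bip3_setD1 (R : comNzRingType) (x : R) : e \in complete_bip3 m n ->
  x%:M - seidel_matrix R (complete_bip3 m n :\ e)
  = diag_mx (colsub bip3_class (\row_p (x - bip3_quot R p p)))
    + mxsub bip3_class bip3_class (bip3_quot R).
Proof.
move=> eE; apply/matrixP => i j; rewrite !mxE.
have [<-|ij] := eqVneq i j; first by rewrite subr0 subrK.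
rewrite /= !mulr0n sub0r add0r /bip3_block !bip3_class_side !bip3_class_mem.
rewrite -(codegree_complete_bip3 ij) -(codegree_setD1 i j eE) natrD.
ring.
Qed.

End Bip3Quotient.

Lemma det_seidel_bip3_setD1 (R : realFieldType) m n (e : {set 'I_(m + n)}) (x : R) :
  (3 <= m)%N -> (2 <= n)%N -> e \in complete_bip3 m n ->
  #|e :&: V1 m n| = 2%N -> #|e :&: V2 m n| = 1%N -> 2 * m%:R + 2 * n%:R < x ->
  \det (x%:M - seidel_matrix R (complete_bip3 m n :\ e))
  = (x - (2 * n%:R - 1)) ^+ (m - 3) * (x - (2 * m%:R - 1)) ^+ (n - 2)
    * - (xi2 R m n).[x].
Proof.
move=> m3 n2 eE e1 e2 x_gt.
have m0 : 0 <= m%:R :> R by rewrite ler0n.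
have n0 : 0 <= n%:R :> R by rewrite ler0n.
pose K := bip3_quot m n R.
pose f (p q : nat) := (p == q)%:R * (x - bip3_block m n R p p)
                      + (bip3_class_size m n p)%:R * bip3_block m n R p q.
rewrite seidel_bip3_setD1 // det_diag_add_mxsub; last first.
  move=> p; rewrite mxE; apply/eqP.
  by case: p => [[|[|[|[|//]]]] ?]; rewrite mxE /bip3_block /=; lra.
have -> : diag_mx (\row_p (x - K p p))
          + diag_mx (\row_p #|[pred i | bip3_class e i == p]|%:R) *m K
          = \matrix_(p, q) f p q.
  by apply/matrixP => p q; rewrite mul_diag_mx !mxE card_bip3_class // /f !mulr_natl.
under eq_bigr do rewrite card_bip3_class //.
rewrite !big_ord_recl !big_ord0 !mxE /=.
repeat rewrite (expand_det_row _ ord0) /cofactor !big_ord_recl ?big_ord0.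
rewrite ?det_mx00 !mxE /= /bump /= ?addn0 ?add0n ?add1n.
rewrite /f /bip3_block /bip3_class_size /bip3_codegree /=.
have natrB_m2 : (m - 2)%:R = m%:R - 2 :> R by rewrite natrB 1?ltnW.
have natrB_n1 : (n - 1)%:R = n%:R - 1 :> R by rewrite natrB 1?ltnW.
have natrB_mn2 : (m + n - 2)%:R = m%:R + n%:R - 2 :> R.
  by rewrite natrB ?natrD // (leq_trans n2) ?leq_addl.
rewrite natrB_m2 natrB_n1 natrB_mn2.
have -> : (m - 2 = (m - 3).+1)%N by rewrite subnSK.
have -> : (n - 1 = (n - 2).+1)%N by rewrite subnSK.
rewrite !subr0 [_ ^+ (m - 3).+1]exprSr [_ ^+ (n - 2).+1]exprSr.
rewrite /xi2 !hornerD !hornerM !hornerC ?hornerXn ?hornerX.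
set P1 := _ ^+ (m - 3); set P2 := _ ^+ (n - 2); clearbody P1 P2.
by field; apply/and4P; split; apply/eqP; lra.
Qed.

Theorem theorem2p8 (R : realFieldType) (m n : nat) (e : {set 'I_(m + n)}) :
  (3 <= m)%N -> (2 <= n)%N ->
  e \in complete_bip3 m n ->
  #|e :&: V1 m n| = 2%N -> #|e :&: V2 m n| = 1%N ->
  char_poly (seidel_matrix R (complete_bip3 m n :\ e))
  = ('X - (2 * n%:R - 1)%:P) ^+ (m - 3)
    * ('X - (2 * m%:R - 1)%:P) ^+ (n - 2)
    * (- xi2 R m n).
Proof.
move=> m3 n2 eE e1 e2; apply: (@eq_poly_gt _ _ _ (2 * m%:R + 2 * n%:R)) => x x_gt.
rewrite horner_char_poly det_seidel_bip3_setD1 //.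
by rewrite !hornerM hornerN !horner_exp !hornerXsubC.
Qed.
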